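(* Let $m$ be a positive integer, let $\lambda$ be the real root of $x^3-mx^2-1$, and let $K=\mathbb{Q}(\lambda)$. Then $\left(\frac{1}{1+\lambda+\lambda^2},\frac{\lambda}{1+\lambda+\lambda^2}\right)$ is a periodic point of $T_{K,5/2}$, i.e. it lies in $\Delta_K$ and there exist positive integers $m_1\neq n_1$ with $T_{K,5/2}^{m_1}\left(\frac{1}{1+\lambda+\lambda^2},\frac{\lambda}{1+\lambda+\lambda^2}\right)=T_{K,5/2}^{n_1}\left(\frac{1}{1+\lambda+\lambda^2},\frac{\lambda}{1+\lambda+\lambda^2}\right)$.
   Context: Let $K\subset\mathbb{R}$ be a real cubic number field, $N=N_{K/\mathbb{Q}}$ its norm, and $r=5/2$. Let $\Delta_K=\{(\alpha,\beta)\in K^2:\ 1,\alpha,\beta \text{ linearly independent over }\mathbb{Q},\ \alpha,\beta>0,\ \alpha+\beta<1\}$ and $Ind=\{(i,j): i,j\in\{0,1,2\},\ i\neq j\}$. Let $\Delta=\{(x,y)\in\mathbb{R}^2: x,y\ge 0,\ x+y\le 1\}$ and $\triangle(1,2)=\{(x,y)\in\Delta: x\ge y\}$, $\triangle(2,1)=\{x\le y\}$, $\triangle(0,1)=\{2x+y-1\le 0\}$, $\triangle(1,0)=\{2x+y-1\ge 0\}$, $\triangle(0,2)=\{x+2y-1\le0\}$, $\triangle(2,0)=\{x+2y-1\ge 0\}$ (all subsets of $\Delta$). Maps $T_{(i,j)}:\triangle(i,j)\to\Delta$: $T_{(1,2)}(x,y)=(\frac{x-y}{1-y},\frac{y}{1-y})$,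 $T_{(2,1)}(x,y)=(\frac{x}{1-x},\frac{y-x}{1-x})$, $T_{(0,1)}(x,y)=(\frac{x}{1-x},\frac{y}{1-x})$, $T_{(1,0)}(x,y)=(\frac{2x+y-1}{x+y},\frac{y}{x+y})$, $T_{(0,2)}(x,y)=(\frac{x}{1-y},\frac{y}{1-y})$, $T_{(2,0)}(x,y)=(\frac{x}{x+y},\frac{x+2y-1}{x+y})$. For $(\alpha,\beta)\in\Delta_K$ put $\gamma=1-\alpha-\beta$ and $v_{\{1,2\}}=\frac{\alpha^r\beta^r}{|N(\alpha)N(\beta)|}$, $v_{\{0,1\}}=\frac{\alpha^r\gamma^r}{|N(\alpha)N(\gamma)|}$, $v_{\{0,2\}}=\frac{\beta^r\gamma^r}{|N(\beta)N(\gamma)|}$; the maximum is attained at a unique pair $\{i_0,j_0\}$. $\varepsilon(\alpha,\beta)$ is the ordered pair $(i,j)\in Ind$ with $\{i,j\}=\{i_0,j_0\}$ and $(\alpha,\beta)\in\triangle(i,j)$, and $T_{K,5/2}(\alpha,\beta)=T_{\varepsilon(\alpha,\beta)}(\alpha,\beta)$ (a map $\Delta_K\to\Delta_K$). *)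

From HB Require Import structures.
From mathcomp Require Import all_boot all_order all_algebra.
From mathcomp Require Import boolp classical_sets reals exp.
Set Implicit Arguments. Unset Strict Implicit. Unset Printing Implicit Defensive.
Import Order.TTheory GRing.Theory Num.Theory.
Local Open Scope ring_scope.

Section Defs.
Variable R : realType.
Implicit Types (lam x y : R) (p : R * R).

(* K = Q(lam) viewed inside R : the Q-span of 1, lam, lam^2
   (lam has degree 3 in the application). *)
Definition inK lam x : Prop :=
  exists a b c : rat, x = ratr a + ratr b * lam + ratr c * lam ^+ 2.

(* Field norm N_{K/Q}(x) = det of the matrix (over Q) of the Q-linear map
   "multiplication by x" in the basis (1, lam, lam^2):
   x * lam^j = \sum_i M i j * lam^i. *)
Definition mulmat lam x : 'M[rat]_3 :=
  xget 0 [set M : 'M[rat]_3 | forall j : 'I_3,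
             x * lam ^+ j = \sum_(i < 3) ratr (M i j) * lam ^+ i].
Definition normK lam x : R := ratr (\det (mulmat lam x)).

Definition Qindep3 (a b : R) : Prop :=
  forall u v w : rat, ratr u + ratr v * a + ratr w * b = 0 -> [/\ u = 0, v = 0 & w = 0].

Definition inDeltaK lam p : Prop :=
  [/\ inK lam p.1, inK lam p.2, Qindep3 p.1 p.2 &
     [/\ 0 < p.1, 0 < p.2 & p.1 + p.2 < 1]].

Definition inInd (ij : nat * nat) : Prop := [/\ (ij.1 < 3)%N, (ij.2 < 3)%N & ij.1 <> ij.2].

Definition inDelta p : Prop := [/\ 0 <= p.1, 0 <= p.2 & p.1 + p.2 <= 1].
Definition tri (ij : nat * nat) p : Prop :=
  let x := p.1 in let y := p.2 in
  inDelta p /\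
  match ij with
  | (1, 2)%N => y <= x
  | (2, 1)%N => x <= y
  | (0, 1)%N => 2 * x + y - 1 <= 0
  | (1, 0)%N => 2 * x + y - 1 >= 0
  | (0, 2)%N => x + 2 * y - 1 <= 0
  | (2, 0)%N => x + 2 * y - 1 >= 0
  | _ => False
  end.

Definition Tij (ij : nat * nat) p : R * R :=
  let x := p.1 in let y := p.2 in
  match ij with
  | (1, 2)%N => ((x - y) / (1 - y), y / (1 - y))
  | (2, 1)%N => (x / (1 - x), (y - x) / (1 - x))
  | (0, 1)%N => (x / (1 - x), y / (1 - x))
  | (1, 0)%N => ((2 * x + y - 1) / (x + y), y / (x + y))
  | (0, 2)%N => (x / (1 - y), y / (1 - y))
  | (2, 0)%N => (x / (x + y), (x + 2 * y - 1) / (x + y))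
  | _ => p
  end.

(* coordinates: index 0 -> gamma = 1 - alpha - beta, 1 -> alpha, 2 -> beta *)
Definition coordK (k : nat) p : R :=
  match k with 0%N => 1 - p.1 - p.2 | 1%N => p.1 | _ => p.2 end.

Definition rr : R := 5%:R / 2%:R.

Definition vK lam (i j : nat) p : R :=
  powR (coordK i p) rr * powR (coordK j p) rr
  / `| normK lam (coordK i p) * normK lam (coordK j p) |.

Definition is_eps lam p (ij : nat * nat) : Prop :=
  [/\ inInd ij,
      (forall kl : nat * nat, inInd kl ->
         ~ (kl.1 = ij.1 /\ kl.2 = ij.2) -> ~ (kl.1 = ij.2 /\ kl.2 = ij.1) ->
         vK lam kl.1 kl.2 p < vK lam ij.1 ij.2 p)
    & tri ij p].

Definition TK lam p : option (R * R) :=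
  if `[< inDeltaK lam p /\ exists! ij, is_eps lam p ij >]
  then Some (Tij (xget (0%N, 0%N) (is_eps lam p)) p)
  else None.

Fixpoint TKiter lam (n : nat) p : option (R * R) :=
  match n with
  | 0%N => Some p
  | n'.+1 => obind (TK lam) (TKiter lam n' p)
  end.

End Defs.

From HB Require Import structures.
From mathcomp Require Import all_boot all_order all_algebra.
From mathcomp Require Import boolp classical_sets reals exp.
From mathcomp Require Import ring lra zify.
Import Order.TTheory GRing.Theory Num.Theory.
Local Open Scope ring_scope.
Set Implicit Arguments. Unset Strict Implicit. Unset Printing Implicit Defensive.

(* In homogeneous coordinates (gamma : alpha : beta), T_(i,j) subtracts the j-th
   coordinate from the i-th one, and v_{i,j} is w(c_i) w(c_j) times a factor that does
   not depend on {i,j}, where w(x) = x^r / |N(x)|.  Starting from P = (lam^2 : 1 : lam),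
   the coordinates stay a permutation of (lam^2 - k lam, lam, 1) with k <= m.  Since
   N(1) = N(lam) = 1 and N(lam^2 - k lam) = 1 + k^2 (m - k) < (lam^2 - k lam)^2, the
   coordinate 1 has the smallest weight, so epsilon always subtracts lam from
   lam^2 - k lam.  After m steps lam^2 - m lam = 1/lam, and rescaling by lam gives P with
   its coordinates rotated; three such phases return to P, hence T^(3m)(P) = P.
   The norm computations rest on N being multiplicative on K, i.e. on 1, lam, lam^2
   being Q-independent: x^3 - m x^2 - 1 has no rational root, so it is irreducible. *)

Lemma coprime_dvdX_eq1 (a b k : nat) : coprime a b -> (a %| b ^ k)%N -> a = 1%N.
Proof.
move=> coab dvab; apply/eqP; rewrite -dvdn1 -(eqnP (coprimeXr k coab)).
by rewrite dvdn_gcd dvdnn.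
Qed.

Definition cubic_pol (m : nat) : {poly rat} := 'X^3 - (m%:R *: 'X^2 + 1).

(* Writing r = n / d in lowest terms, d divides n^3 and n divides d^3, so r = 1 or -1. *)
Lemma cubic_pol_noroot (m : nat) (r : rat) : (0 < m)%N -> ~~ root (cubic_pol m) r.
Proof.
move=> m_gt0; apply/negP => root_p.
have : r ^+ 3 - (m%:R * r ^+ 2 + 1) = 0.
  by apply/eqP; move: root_p; rewrite /root /cubic_pol !hornerE.
case: (ratP r) => n d cop root_r.
have int_eq : n ^+ 3 = d.+1%:Z * (m%:Z * n ^+ 2 + d.+1%:Z ^+ 2).
  apply/eqP; rewrite -(eqr_int rat) !(rmorphXn, rmorphM, rmorphD) /= -subr_eq0; apply/eqP.
  rewrite -[RHS](mul0r (d.+1%:Q ^+ 3)) -root_r; field.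
  by rewrite addrC natr1 pnatr_eq0.
have int_eq' : d.+1%:Z ^+ 3 = n * (n ^+ 2 - m%:Z * n * d.+1%:Z).
  apply/eqP; rewrite -subr_eq0; apply/eqP.
  transitivity (- (n ^+ 3 - d.+1%:Z * (m%:Z * n ^+ 2 + d.+1%:Z ^+ 2))); first by ring.
  by rewrite int_eq subrr oppr0.
have den1 : d.+1 = 1%N.
  apply: (@coprime_dvdX_eq1 _ `|n|%N 3); first by rewrite coprime_sym.
  by rewrite -abszX int_eq abszM dvdn_mulr.
have num1 : `|n|%N = 1%N.
  apply: (coprime_dvdX_eq1 cop (_ : _ %| d.+1 ^ 3)%N).
  by rewrite -[d.+1]/`|d.+1%:Z|%N -abszX int_eq' abszM dvdn_mulr.
have [n1 | n1] : n = 1 \/ n = -1 by lia.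
all: by move: int_eq; rewrite n1 den1; lia.
Qed.

Lemma size_cubic_pol m : size (cubic_pol m) = 4%N.
Proof.
rewrite /cubic_pol size_polyDl ?size_polyXn // size_polyN.
rewrite (leq_ltn_trans (size_polyD _ _)) // gtn_max size_polyC.
by rewrite (leq_ltn_trans (size_scale_leq _ _)) ?size_polyXn //; case: eqP.
Qed.

Lemma cubic_pol_irreducible m : (0 < m)%N -> irreducible_poly (cubic_pol m).
Proof.
move=> m_gt0; apply: cubic_irreducible => [|r]; first by rewrite size_cubic_pol.
exact: cubic_pol_noroot.
Qed.

Lemma sum3 (V : nmodType) (F : 'I_3 -> V) : \sum_(i < 3) F i = F 0 + F 1 + F 2.
Proof.
rewrite !big_ord_recl big_ord0 addr0 addrA.
by congr (F _ + F _ + F _); apply/val_inj.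
Qed.

Lemma sum3_pow (T : comNzRingType) (F : 'I_3 -> T) (x : T) :
  \sum_(i < 3) F i * x ^+ i = F 0 + F 1 * x + F 2 * x ^+ 2.
Proof. by rewrite sum3 expr0 mulr1. Qed.

Section CubicRoot.
Variables (R : realType) (m : nat) (lam : R).
Hypotheses (m_gt0 : (0 < m)%N) (lam_root : lam ^+ 3 - m%:R * lam ^+ 2 - 1 = 0).

Lemma cubic_root_small_poly (p : {poly rat}) :
  (size p <= 3)%N -> root (map_poly ratr p) lam -> p = 0.
Proof.
move=> size_p root_p; apply/eqP; apply: contraT => p_neq0.
have cop : coprimep p (cubic_pol m).
  apply/negPn/negP => ncop.
  have /eqp_size := (cubic_pol_irreducible m_gt0).2 _ ncop (dvdp_gcdr p _).
  rewrite size_cubic_pol => size_gcd.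
  by have := leq_trans (dvdp_leq p_neq0 (dvdp_gcdl p (cubic_pol m))) size_p; rewrite size_gcd.
have := coprimep_root (_ : coprimep (map_poly ratr p) (map_poly ratr (cubic_pol m))) root_p.
rewrite coprimep_map => /(_ cop).
rewrite /cubic_pol rmorphB rmorphD /= map_polyXn linearZ /= map_polyXn rmorph1 !hornerE.
have := lam_root; rewrite rmorph_nat opprD addrA expr2 mulrA => ->.
by rewrite eqxx.
Qed.

Lemma Qindep3_cubic_root : Qindep3 lam (lam ^+ 2).
Proof.
move=> u v w comb0.
pose p : {poly rat} := \poly_(i < 3) [:: u; v; w]`_i.
have p0 : p = 0.
  apply: cubic_root_small_poly; first exact: size_poly.
  rewrite /root (@horner_coef_wide _ 3) ?size_map_poly ?size_poly // sum3_pow.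
  by rewrite !coef_map !coef_poly /= comb0.
have coef_p0 k : (k < 3)%N -> [:: u; v; w]`_k = 0 :> rat.
  by move=> lt_k3; have := congr1 (fun q : {poly rat} => q`_k) p0; rewrite coef_poly coef0 lt_k3.
by split; [apply: (coef_p0 0%N) | apply: (coef_p0 1%N) | apply: (coef_p0 2%N)].
Qed.
End CubicRoot.

Definition mul_repr (R : realType) (lam x : R) (M : 'M[rat]_3) :=
  forall j : 'I_3, x * lam ^+ j = \sum_(i < 3) ratr (M i j) * lam ^+ i.

Definition cvec (R : realType) (lam : R) (v : 'cV[rat]_3) : R :=
  \sum_(i < 3) ratr (v i 0) * lam ^+ i.

Lemma ord3P (j : 'I_3) : [\/ j = 0, j = 1 | j = 2].
Proof.
by case: j => [[|[|[|k]]]] hj; [constructor 1 | constructor 2 | constructor 3 |];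
  rewrite //; apply/val_inj.
Qed.

Definition third (i j : nat) : nat := (3 - i - j)%N.

Lemma pair_prod_lt (R : realDomainType) (w : nat -> R) (i j k l : nat) :
  inInd (i, j) -> inInd (k, l) -> (forall n, (n < 3)%N -> 0 < w n) ->
  w (third i j) < w i -> w (third i j) < w j ->
  ~ (k = i /\ l = j) -> ~ (k = j /\ l = i) -> w k * w l < w i * w j.
Proof.
move=> [/= i3 j3 ij] [/= k3 l3 kl] w_pos.
have := w_pos 0%N isT; have := w_pos 1%N isT; have := w_pos 2%N isT.
case: i j k l i3 j3 k3 l3 ij kl => [|[|[|?]]] [|[|[|?]]] [|[|[|?]]] [|[|[|?]]] //=;
  rewrite /third /= => *; first [nra | by exfalso; tauto].
Qed.

Section EpsilonUnique.
Variables (R : realType) (lam : R) (p : R * R).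

Lemma is_eps_pair ij ij' : is_eps lam p ij -> is_eps lam p ij' ->
  (ij'.1 = ij.1 /\ ij'.2 = ij.2) \/ (ij'.1 = ij.2 /\ ij'.2 = ij.1).
Proof.
case=> ijInd ij_max _ [ijInd' ij'_max _].
have [same|diff] := pselect (ij'.1 = ij.1 /\ ij'.2 = ij.2); first by left.
have [flip|diff'] := pselect (ij'.1 = ij.2 /\ ij'.2 = ij.1); first by right.
have lt1 := ij_max ij' ijInd' diff diff'.
have lt2 : vK lam ij.1 ij.2 p < vK lam ij'.1 ij'.2 p.
  by apply: ij'_max => // -[? ?]; [apply: diff | apply: diff']; split.
by have := lt_trans lt1 lt2; rewrite ltxx.
Qed.

Lemma TK_eps i j : inDeltaK lam p -> is_eps lam p (i, j) -> ~ is_eps lam p (j, i) ->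
  TK lam p = Some (Tij (i, j) p).
Proof.
move=> pD eps_ij not_eps_ji.
have eps_uniq ij' : is_eps lam p ij' -> ij' = (i, j).
  case: ij' => k l eps_kl; case: (is_eps_pair eps_ij eps_kl) => /= [[-> ->] //|[ki lj]].
  by move: eps_kl; rewrite ki lj.
rewrite /TK asboolT; last by split => //; exists (i, j); split => // ij' /eps_uniq.
by rewrite (xget_unique _ eps_ij).
Qed.
End EpsilonUnique.

Lemma TKiterD (R : realType) (lam : R) p a b :
  TKiter lam (a + b) p = obind (TKiter lam b) (TKiter lam a p).
Proof.
elim: b => [|b IH]; first by rewrite addn0; case: (TKiter lam a p).
by rewrite addnS /= IH; case: (TKiter lam a p).
Qed.

Lemma TKiter_orbit (R : realType) (lam : R) (f : nat -> R * R) N :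
  (forall k, (k < N)%N -> TK lam (f k) = Some (f k.+1)) ->
  TKiter lam N (f 0%N) = Some (f N).
Proof.
move=> f_step; suff: forall k, (k <= N)%N -> TKiter lam k (f 0%N) = Some (f k) by apply.
by elim=> [|k IH] lt_kN //=; rewrite IH ?(ltnW lt_kN) //= f_step.
Qed.

(* The point with homogeneous coordinates (gamma : alpha : beta) = (c 0 : c 1 : c 2);
   in these coordinates T_(i,j) is [lower i j] (Tij_hpoint). *)
Definition hpoint (R : realType) (c : nat -> R) : R * R :=
  (c 1%N / (c 0%N + c 1%N + c 2%N), c 2%N / (c 0%N + c 1%N + c 2%N)).

Definition lower (R : realType) (i j : nat) (c : nat -> R) : nat -> R :=
  fun n => if n == i then c i - c j else c n.

Definition weight (R : realType) (lam x : R) : R := powR x (rr R) / `|normK lam x|.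

Definition Qfree3 (R : realType) (a b c : R) : Prop :=
  forall u v w : rat, ratr u * a + ratr v * b + ratr w * c = 0 -> [/\ u = 0, v = 0 & w = 0].

Lemma Qfree3_rot (R : realType) (a b c : R) : Qfree3 a b c -> Qfree3 b c a.
Proof. by move=> abc_free u v w comb0; have [] := abc_free w u v; rewrite // -comb0; ring. Qed.

Lemma Qfree3_swap (R : realType) (a b c : R) : Qfree3 a b c -> Qfree3 b a c.
Proof. by move=> abc_free u v w comb0; have [] := abc_free v u w; rewrite // -comb0; ring. Qed.

Lemma third_neq i j : inInd (i, j) -> third i j != i /\ third i j != j.
Proof. by case: i j => [|[|[|?]]] [|[|[|?]]] [] //. Qed.

Lemma eq_hpoint (R : realType) (c d : nat -> R) :
  (forall n, (n < 3)%N -> c n = d n) -> hpoint c = hpoint d.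
Proof. by move=> cd; rewrite /hpoint !cd. Qed.

Lemma hpointZ (R : realType) (t : R) (c : nat -> R) :
  t != 0 -> hpoint (fun n => t * c n) = hpoint c.
Proof.
by move=> t_neq0; rewrite /hpoint -!mulrDr; congr (_, _); rewrite invfM mulrACA divff // mul1r.
Qed.

Lemma powR_div (R : realType) (x y r : R) :
  0 <= x -> 0 < y -> powR (x / y) r = powR x r / powR y r.
Proof.
move=> x_ge0 y_gt0; apply: (canRL (mulfK (lt0r_neq0 (powR_gt0 _ y_gt0)))).
rewrite -powRM ?divfK ?lt0r_neq0 //; [exact: divr_ge0 x_ge0 (ltW y_gt0) | exact: ltW].
Qed.

Lemma quotient_weight_scale (F : numFieldType) (pi pj pS Ni Nj NS : F) :
  `|Ni| != 0 -> `|Nj| != 0 -> `|NS| != 0 -> pS != 0 ->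
  pi / pS * (pj / pS) / `|Ni / NS * (Nj / NS)| =
  pi / `|Ni| * (pj / `|Nj|) * (`|NS| / pS) ^+ 2.
Proof.
rewrite normrM !normf_div; move: `|Ni| `|Nj| `|NS| => a b d a_neq0 b_neq0 d_neq0 pS_neq0.
by field; rewrite pS_neq0 a_neq0 b_neq0 d_neq0.
Qed.

Section CubicField.
Variables (R : realType) (lam : R) (C : 'M[rat]_3).
Hypotheses (lam_free : Qindep3 lam (lam ^+ 2)) (C_repr : mul_repr lam lam C).

Lemma cvecB v w : cvec lam (v - w) = cvec lam v - cvec lam w.
Proof. by rewrite /cvec -sumrB; apply: eq_bigr => i _; rewrite !mxE rmorphB mulrBl. Qed.

Lemma cvec_eq0 v : cvec lam v = 0 -> v = 0.
Proof.
rewrite /cvec sum3_pow => /lam_free [v0 v1 v2].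
by apply/colP => i; rewrite mxE; case: (ord3P i) => ->.
Qed.

Lemma cvec_col x M j : mul_repr lam x M -> cvec lam (col j M) = x * lam ^+ j.
Proof. by move=> xM; rewrite xM; apply: eq_bigr => i _; rewrite mxE. Qed.

Lemma mul_repr_cvec x M v : mul_repr lam x M -> x * cvec lam v = cvec lam (M *m v).
Proof.
move=> xM; rewrite /cvec mulr_sumr.
under eq_bigr => j _ do rewrite mulrCA xM mulr_sumr.
rewrite exchange_big /=; apply: eq_bigr => i _.
rewrite mxE rmorph_sum mulr_suml; apply: eq_bigr => j _.
by rewrite rmorphM /= mulrCA mulrA.
Qed.

Lemma mul_repr_uniq x M M' : mul_repr lam x M -> mul_repr lam x M' -> M = M'.
Proof.
move=> xM xM'; apply/matrixP => i j; apply/eqP; rewrite -subr_eq0; apply/eqP.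
have := cvecB (col j M) (col j M'); rewrite (cvec_col j xM) (cvec_col j xM') subrr.
by move/cvec_eq0/colP/(_ i); rewrite !mxE.
Qed.

Lemma mulmat_repr x M : mul_repr lam x M -> mulmat lam x = M.
Proof. by move=> xM; apply: xget_unique => // M' xM'; apply: mul_repr_uniq xM' xM. Qed.

Lemma mul_repr_rat a : mul_repr lam (ratr a) a%:M.
Proof.
move=> j; rewrite (bigD1 j) //= big1 => [|i /negbTE neq_ij].
  by rewrite mxE eqxx mulr1n addr0.
by rewrite mxE neq_ij mulr0n rmorph0 mul0r.
Qed.

Lemma mul_repr_add x y M N :
  mul_repr lam x M -> mul_repr lam y N -> mul_repr lam (x + y) (M + N).
Proof.
move=> xM yN j; rewrite mulrDl xM yN -big_split /=.
by apply: eq_bigr => i _; rewrite mxE rmorphD mulrDl.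
Qed.

Lemma mul_repr_mul x y M N :
  mul_repr lam x M -> mul_repr lam y N -> mul_repr lam (x * y) (M *m N).
Proof.
move=> xM yN j; have := mul_repr_cvec (col j N) xM.
rewrite -mulrA (cvec_col j yN) => ->; apply: eq_bigr => i _; rewrite !mxE.
by congr (ratr _ * _); apply: eq_bigr => k _; rewrite mxE.
Qed.

Lemma mul_repr_inK x M : mul_repr lam x M -> inK lam x.
Proof.
move=> /(_ 0); rewrite expr0 mulr1 sum3_pow => ->.
by exists (M 0 0), (M 1 0), (M 2 0).
Qed.

Lemma inK_mul_repr x : inK lam x -> exists M, mul_repr lam x M.
Proof.
case=> a [b [c ->]]; exists (a%:M + b%:M *m C + c%:M *m (C *m C)).
have rat_lam q : mul_repr lam (ratr q * lam) (q%:M *m C).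
  exact: mul_repr_mul (mul_repr_rat q) C_repr.
apply: mul_repr_add; first exact: mul_repr_add (mul_repr_rat a) (rat_lam b).
by rewrite expr2; apply: mul_repr_mul (mul_repr_rat c) (mul_repr_mul C_repr C_repr).
Qed.

Lemma normK_repr x M : mul_repr lam x M -> normK lam x = ratr (\det M).
Proof. by move=> xM; rewrite /normK (mulmat_repr xM). Qed.

Lemma inKD x y : inK lam x -> inK lam y -> inK lam (x + y).
Proof.
move=> /inK_mul_repr[M xM] /inK_mul_repr[N yN].
exact: mul_repr_inK (mul_repr_add xM yN).
Qed.

Lemma inKM x y : inK lam x -> inK lam y -> inK lam (x * y).
Proof.
move=> /inK_mul_repr[M xM] /inK_mul_repr[N yN].
exact: mul_repr_inK (mul_repr_mul xM yN).
Qed.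

Lemma normKM x y : inK lam x -> inK lam y -> normK lam (x * y) = normK lam x * normK lam y.
Proof.
move=> /inK_mul_repr[M xM] /inK_mul_repr[N yN].
by rewrite !(normK_repr (mul_repr_mul xM yN)) (normK_repr xM) (normK_repr yN) det_mulmx rmorphM.
Qed.

Lemma normK_neq0 x : inK lam x -> x != 0 -> normK lam x != 0.
Proof.
move=> /inK_mul_repr[M xM] x_neq0; rewrite (normK_repr xM) fmorph_eq0 -det_tr.
apply/negP => /det0P[v v_neq0 vM0].
have : x * cvec lam v^T = 0.
  rewrite (mul_repr_cvec _ xM) -[M]trmxK -trmx_mul vM0 trmx0.
  by rewrite /cvec big1 // => i _; rewrite mxE rmorph0 mul0r.
move/eqP; rewrite mulf_eq0 (negbTE x_neq0) => /eqP /cvec_eq0 /(congr1 trmx).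
by rewrite trmxK trmx0; apply/eqP.
Qed.

Lemma inKV x : inK lam x -> x != 0 -> inK lam x^-1.
Proof.
move=> xK x_neq0; have [M xM] := inK_mul_repr xK.
have M_unit : M \in unitmx.
  by have := normK_neq0 xK x_neq0; rewrite (normK_repr xM) fmorph_eq0 unitmxE unitfE.
pose e0 : 'cV[rat]_3 := delta_mx 0 0.
have : x * cvec lam (invmx M *m e0) = 1.
  rewrite (mul_repr_cvec _ xM) mulmxA mulmxV // mul1mx /cvec sum3_pow !mxE /=.
  by rewrite rmorph1 !rmorph0 !mul0r !addr0.
move/(canRL (mulKf x_neq0)); rewrite mulr1 => <-.
by rewrite /cvec sum3_pow; do 3!eexists.
Qed.

Lemma normK1 : normK lam 1 = 1.
Proof. by have := normK_repr (mul_repr_rat 1); rewrite rmorph1 det1 rmorph1 => h; apply: h. Qed.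

Lemma normKV x : inK lam x -> x != 0 -> normK lam x^-1 = (normK lam x)^-1.
Proof.
move=> xK x_neq0; apply: (mulfI (normK_neq0 xK x_neq0)).
rewrite -normKM //; last exact: inKV.
by rewrite !divff ?normK_neq0 // normK1.
Qed.

Section HomogeneousPoint.
Variable c : nat -> R.
Hypotheses (c0_gt0 : 0 < c 0%N) (c1_gt0 : 0 < c 1%N) (c2_gt0 : 0 < c 2%N).
Hypothesis c_inK : forall n, (n < 3)%N -> inK lam (c n).

Local Notation S := (c 0%N + c 1%N + c 2%N).

Lemma c_gt0 n : (n < 3)%N -> 0 < c n.
Proof. by case: n => [|[|[|n]]]. Qed.

Lemma hsum_gt0 : 0 < S.
Proof. by rewrite !addr_gt0. Qed.

Lemma hsum_inK : inK lam S.
Proof. by apply: inKD; [apply: inKD|]; apply: c_inK. Qed.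

Lemma coordK_hpoint n : (n < 3)%N -> coordK n (hpoint c) = c n / S.
Proof.
have S_neq0 := lt0r_neq0 hsum_gt0.
by case: n => [|[|[|n]]] // _; rewrite /coordK /hpoint /=; field.
Qed.

Lemma vK_hpoint i j : (i < 3)%N -> (j < 3)%N ->
  vK lam i j (hpoint c) =
  weight lam (c i) * weight lam (c j) * (`|normK lam S| / powR S (rr R)) ^+ 2.
Proof.
move=> i3 j3; have S_gt0 := hsum_gt0; have S_neq0 := lt0r_neq0 S_gt0.
have normK_div n : (n < 3)%N -> normK lam (c n / S) = normK lam (c n) / normK lam S.
  move=> /c_inK cn_inK; have S_inK := hsum_inK.
  by rewrite normKM ?normKV //; apply: inKV.
have N_neq0 n : (n < 3)%N -> `|normK lam (c n)| != 0.
  by move=> n3; rewrite normr_eq0; apply: normK_neq0; [apply: c_inK | apply/lt0r_neq0/c_gt0].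
have NS_neq0 : `|normK lam S| != 0.
  by rewrite normr_eq0; apply: normK_neq0; [apply: hsum_inK |].
have PS_neq0 : powR S (rr R) != 0 by rewrite lt0r_neq0 ?powR_gt0.
rewrite /vK /weight !coordK_hpoint // !powR_div ?ltW ?c_gt0 // !normK_div //.
by apply: quotient_weight_scale => //; apply: N_neq0.
Qed.

Lemma inDelta_hpoint : inDelta (hpoint c).
Proof.
have S_gt0 := hsum_gt0.
split; rewrite /hpoint /=; try exact: divr_ge0 (ltW _) (ltW S_gt0).
by rewrite -mulrDl ler_pdivrMr // mul1r -addrA lerDr ltW.
Qed.

Lemma tri_hpoint i j : inInd (i, j) -> tri (i, j) (hpoint c) <-> c j <= c i.
Proof.
move=> [/= i3 j3 neq_ij]; have S_gt0 := hsum_gt0.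
have xS : c 1%N / S * S = c 1%N by rewrite divfK ?lt0r_neq0.
have yS : c 2%N / S * S = c 2%N by rewrite divfK ?lt0r_neq0.
rewrite /tri /=; split=> [[_]|le_ji]; [|split; [exact: inDelta_hpoint|move: le_ji]].
all: move: (c 1%N / S) (c 2%N / S) xS yS => x y xS yS.
all: case: i j i3 j3 neq_ij => [|[|[|?]]] [|[|[|?]]] //= _ _ _ h; nra.
Qed.

Lemma Tij_hpoint i j : inInd (i, j) -> c j < c i ->
  Tij (i, j) (hpoint c) = hpoint (lower i j c).
Proof.
move=> [/= i3 j3 neq_ij] lt_ji; have S_gt0 := hsum_gt0.
rewrite /hpoint /lower.
case: i j i3 j3 neq_ij lt_ji => [|[|[|?]]] [|[|[|?]]] //= _ _ _ lt_ji; congr (_, _); field.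
(* [lra] ignores section hypotheses, hence the [move:]. *)
all: by move: c0_gt0 c1_gt0 c2_gt0 => *; apply/andP; split; apply: lt0r_neq0; lra.
Qed.

Lemma inDeltaK_hpoint : Qfree3 (c 0%N) (c 1%N) (c 2%N) -> inDeltaK lam (hpoint c).
Proof.
move=> c_free; have S_gt0 := hsum_gt0; have S_neq0 := lt0r_neq0 S_gt0.
have Sinv_inK := inKV hsum_inK S_neq0.
split; rewrite /hpoint /=; try by apply: inKM => //; apply: c_inK.
- move=> u v w comb0.
  have [u0 uv0 uw0] : [/\ u = 0, u + v = 0 & u + w = 0].
    apply: c_free; rewrite !rmorphD /= -[RHS](mul0r S) -comb0.
    by field; apply: lt0r_neq0.
  by split=> //; [move: uv0 | move: uw0]; rewrite u0 add0r.
- split; [exact: divr_gt0 | exact: divr_gt0 |].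
  by rewrite -mulrDl ltr_pdivrMr // mul1r -addrA ltrDr.
Qed.

Lemma weight_hpoint_gt0 n : (n < 3)%N -> 0 < weight lam (c n).
Proof.
move=> n3; apply: divr_gt0; first exact/powR_gt0/c_gt0.
by rewrite normr_gt0; apply: normK_neq0; [apply: c_inK | apply/lt0r_neq0/c_gt0].
Qed.

Lemma is_eps_hpoint i j : inInd (i, j) ->
  weight lam (c (third i j)) < weight lam (c i) ->
  weight lam (c (third i j)) < weight lam (c j) ->
  c j <= c i -> is_eps lam (hpoint c) (i, j).
Proof.
move=> ij_Ind lt_ti lt_tj le_ji; split=> //; last exact/tri_hpoint.
move=> [k l] kl_Ind /= not_ij not_ji.
have [/= i3 j3 _] := ij_Ind; have [/= k3 l3 _] := kl_Ind.
have scale_gt0 : 0 < (`|normK lam S| / powR S (rr R)) ^+ 2.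
  apply/exprn_gt0/divr_gt0; last exact/powR_gt0/hsum_gt0.
  by rewrite normr_gt0; apply: normK_neq0; [apply: hsum_inK | apply/lt0r_neq0/hsum_gt0].
rewrite !vK_hpoint // ltr_pM2r //.
exact: (pair_prod_lt (w := fun n => weight lam (c n))) weight_hpoint_gt0 lt_ti lt_tj not_ij not_ji.
Qed.

Lemma TK_hpoint i j : inInd (i, j) -> Qfree3 (c 0%N) (c 1%N) (c 2%N) ->
  weight lam (c (third i j)) < weight lam (c i) ->
  weight lam (c (third i j)) < weight lam (c j) ->
  c j < c i -> TK lam (hpoint c) = Some (hpoint (lower i j c)).
Proof.
move=> ij_Ind c_free lt_ti lt_tj lt_ji; rewrite -Tij_hpoint //.
apply: TK_eps; first exact: inDeltaK_hpoint.
  exact: is_eps_hpoint (ltW lt_ji).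
have ji_Ind : inInd (j, i) by case: ij_Ind => i3 j3 neq_ij; split=> //; apply/nesym.
by case=> _ _ /(tri_hpoint ji_Ind); rewrite leNgt lt_ji.
Qed.

End HomogeneousPoint.

End CubicField.

Lemma det_mx33 (T : comNzRingType) (A : 'M[T]_3) :
  \det A = A 0 0 * (A 1 1 * A 2 2 - A 1 2 * A 2 1)
         - A 0 1 * (A 1 0 * A 2 2 - A 1 2 * A 2 0)
         + A 0 2 * (A 1 0 * A 2 1 - A 1 1 * A 2 0).
Proof.
rewrite (expand_det_row _ ord0) !big_ord_recl big_ord0 /= /cofactor.
rewrite !(expand_det_row _ ord0) !big_ord_recl !big_ord0 /= /cofactor.
rewrite !det_mx11 !mxE /=.
pose B (a b : nat) := A (inord a) (inord b).
have E : forall i j : 'I_3, A i j = B i j by move=> i j; rewrite /B !inord_val.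
rewrite !E /= !expr0 !expr1 /= !expr2.
ring.
Qed.

(* Multiplication by lam in the basis (1, lam, lam^2), using lam^3 = 1 + m lam^2. *)
Definition companion_cubic (m : nat) : 'M[rat]_3 :=
  \matrix_(i, j) if (j < 2)%N then (i == j.+1 :> nat)%:R else [:: 1; 0; m%:R]`_i.

Lemma rr_ge2 (R : realType) : 2 <= rr R.
Proof. rewrite /rr; lra. Qed.

Section Orbit.
Variables (R : realType) (m : nat) (lam : R).
Hypotheses (m_gt0 : (0 < m)%N) (lam_root : lam ^+ 3 - m%:R * lam ^+ 2 - 1 = 0).

Let lam_free := Qindep3_cubic_root m_gt0 lam_root.

Lemma companion_cubic_repr : mul_repr lam lam (companion_cubic m).
Proof.
case=> [[|[|[|//]]] j3]; rewrite sum3_pow !mxE /= ?rmorph0 ?rmorph1 ?rmorph_nat.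
- by rewrite expr0; ring.
- by rewrite expr1; ring.
- by rewrite mul0r addr0; apply/eqP; rewrite -subr_eq0 -lam_root; apply/eqP; ring.
Qed.

Let C_repr := companion_cubic_repr.

Lemma lam_gt_m : m%:R < lam.
Proof.
have sq_mul : lam ^+ 2 * (lam - m%:R) = 1.
  by apply/eqP; rewrite -subr_eq0 -lam_root; apply/eqP; ring.
rewrite ltNge; apply/negP => le_lam_m.
have : lam ^+ 2 * (lam - m%:R) <= 0 by rewrite mulr_ge0_le0 ?sqr_ge0 // subr_le0.
by rewrite sq_mul ler10.
Qed.

Lemma lam_gt1 : 1 < lam.
Proof. by apply: le_lt_trans lam_gt_m; rewrite ler1n. Qed.

Definition shift k := lam ^+ 2 - k%:R * lam.

Lemma shiftS k : shift k - lam = shift k.+1.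
Proof. by rewrite /shift -natr1; ring. Qed.

Lemma lam_lt_shift k : (k < m)%N -> lam < shift k.
Proof.
move=> lt_km; have := lam_gt_m; have := lam_gt1.
have : k%:R + 1 <= m%:R :> R by rewrite natr1 ler_nat.
rewrite /shift; nra.
Qed.

Lemma lam_mul_shift_m : lam * shift m = 1.
Proof. by apply/eqP; rewrite -subr_eq0 -lam_root /shift; apply/eqP; ring. Qed.

Lemma normK_lam : normK lam lam = 1.
Proof.
rewrite (normK_repr lam_free C_repr) det_mx33 !mxE /=.
by rewrite (_ : _ + _ = 1) ?rmorph1 //; ring.
Qed.

Lemma normK_shift k : normK lam (shift k) = 1 + k%:R ^+ 2 * (m%:R - k%:R).
Proof.
have shift_repr := mul_repr_mul C_repr (mul_repr_add C_repr (mul_repr_rat lam (- k%:R))).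
have -> : shift k = lam * (lam + ratr (- k%:R)) by rewrite /shift rmorphN rmorph_nat; ring.
rewrite (normK_repr lam_free shift_repr) det_mulmx !det_mx33 !mxE /=.
set q := (X in ratr X); have -> : q = 1 + k%:R ^+ 2 * (m%:R - k%:R) by rewrite /q; ring.
by rewrite rmorphD rmorph1 rmorphM rmorphB rmorphXn !rmorph_nat.
Qed.

Lemma weight1 : weight lam 1 = 1.
Proof. by rewrite /weight powR1 (normK1 lam_free) normr1 divr1. Qed.

Lemma weight_lam_gt1 : 1 < weight lam lam.
Proof.
rewrite /weight normK_lam normr1 divr1.
apply: (lt_le_trans lam_gt1); apply: le1r_powR; first exact: ltW lam_gt1.
by apply: le_trans (rr_ge2 R); rewrite ler1n.
Qed.

Lemma weight_shift_gt1 k : (k < m)%N -> 1 < weight lam (shift k).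
Proof.
(* N(shift k) = 1 + k^2 (m - k) <= (m (m - k))^2 < (shift k)^2 <= (shift k)^r. *)
move=> lt_km; rewrite /weight normK_shift.
have k_ge0 : 0 <= k%:R :> R := ler0n _ k.
have j_ge1 : 1 <= m%:R - k%:R :> R by rewrite lerBrDl natr1 ler_nat.
have shift_gt : m%:R * (m%:R - k%:R) < shift k.
  by rewrite /shift; have := lam_gt_m; nra.
have shift_ge1 : 1 <= shift k by nra.
have norm_lt : 1 + k%:R ^+ 2 * (m%:R - k%:R) < shift k ^+ 2.
  have m_eq : m%:R = k%:R + (m%:R - k%:R) :> R by rewrite subrKC.
  move: shift_gt; rewrite {1}m_eq; move: (m%:R - k%:R) j_ge1 => j j_ge1 shift_gt.
  have t_ge1 : 1 <= (k%:R + j) * j by nra.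
  suff : 1 + k%:R ^+ 2 * j <= ((k%:R + j) * j) ^+ 2 by nra.
  have j1_ge0 : 0 <= j - 1 by rewrite subr_ge0.
  have := mulr_ge0 (mulr_ge0 (sqr_ge0 (k%:R : R)) (le_trans ler01 j_ge1)) j1_ge0.
  nra.
have norm_gt0 : 0 < 1 + k%:R ^+ 2 * (m%:R - k%:R) :> R.
  by rewrite ltr_wpDr ?ltr01 // mulr_ge0 ?sqr_ge0 // (le_trans ler01 j_ge1).
rewrite gtr0_norm // ltr_pdivlMr // mul1r.
apply: (lt_le_trans norm_lt); rewrite -powR_mulrn ?(le_trans ler01) //.
by apply: ler_powR => //; apply: rr_ge2.
Qed.

Lemma Qfree3_shift k : Qfree3 (shift k) lam 1.
Proof.
move=> u v w comb0.
have [w0 vk0 u0] : [/\ w = 0, v - u * k%:R = 0 & u = 0].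
  apply: lam_free; rewrite -[RHS]comb0 /shift rmorphB rmorphM rmorph_nat; ring.
by split=> //; move: vk0; rewrite u0 mul0r subr0.
Qed.

Definition orbit_coord (i j k : nat) : nat -> R :=
  fun n => if n == i then shift k else if n == j then lam else 1.

Lemma orbit_coord_rescale i j : inInd (i, j) ->
  hpoint (orbit_coord i j m) = hpoint (orbit_coord j (third i j) 0).
Proof.
move=> ij_Ind; rewrite -(hpointZ _ (lt0r_neq0 (lt_trans ltr01 lam_gt1))).
apply: eq_hpoint => n n3; rewrite /orbit_coord.
case: i j ij_Ind => [|[|[|?]]] [|[|[|?]]] [] //= _ _ _; case: n n3 => [|[|[|?]]] //= _.
all: by rewrite ?lam_mul_shift_m ?mulr1 // /shift mul0r subr0 expr2.
Qed.

Section Phase.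
Variables (i j k : nat).
Hypotheses (ij_Ind : inInd (i, j)) (lt_km : (k < m)%N).

Lemma orbit_coord_gt0 n : 0 < orbit_coord i j k n.
Proof.
have lam_gt0 := lt_trans ltr01 lam_gt1.
have shift_gt0 := lt_trans lam_gt0 (lam_lt_shift lt_km).
by rewrite /orbit_coord; case: ifP => // _; case: ifP.
Qed.

Lemma orbit_coord_inK n : inK lam (orbit_coord i j k n).
Proof.
rewrite /orbit_coord; case: ifP => _.
  by exists 0, (- k%:R), 1; rewrite /shift rmorph0 rmorphN rmorph1 rmorph_nat; ring.
by case: ifP => _; [exists 0, 1, 0 | exists 1, 0, 0]; rewrite ?rmorph0 ?rmorph1; ring.
Qed.

Lemma orbit_coord_free :
  Qfree3 (orbit_coord i j k 0) (orbit_coord i j k 1) (orbit_coord i j k 2).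
Proof.
have free := @Qfree3_shift k.
rewrite /orbit_coord; case: i j ij_Ind => [|[|[|?]]] [|[|[|?]]] [] //= _ _ _.
- exact: Qfree3_swap (Qfree3_rot (Qfree3_rot free)).
- exact: Qfree3_swap free.
- exact: Qfree3_rot (Qfree3_rot free).
- exact: Qfree3_rot free.
- exact: Qfree3_swap (Qfree3_rot free).
Qed.

Lemma inDeltaK_orbit : inDeltaK lam (hpoint (orbit_coord i j k)).
Proof.
exact: (inDeltaK_hpoint lam_free C_repr (orbit_coord_gt0 0) (orbit_coord_gt0 1)
          (orbit_coord_gt0 2) (fun n _ => orbit_coord_inK n) orbit_coord_free).
Qed.

Lemma TK_orbit_step :
  TK lam (hpoint (orbit_coord i j k)) = Some (hpoint (orbit_coord i j k.+1)).
Proof.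
have [ti tj] := third_neq ij_Ind.
have ji : (j == i) = false by apply/eqP; case: ij_Ind => _ _ /nesym.
have at_i : orbit_coord i j k i = shift k by rewrite /orbit_coord eqxx.
have at_j : orbit_coord i j k j = lam by rewrite /orbit_coord ji eqxx.
have at_t : orbit_coord i j k (third i j) = 1 by rewrite /orbit_coord (negbTE ti) (negbTE tj).
rewrite (TK_hpoint lam_free C_repr (orbit_coord_gt0 0) (orbit_coord_gt0 1) (orbit_coord_gt0 2)
          (fun n _ => orbit_coord_inK n) ij_Ind orbit_coord_free) ?at_i ?at_j ?at_t ?weight1.
- congr (Some (hpoint _)); apply: funext => n; rewrite /lower /orbit_coord.
  by case: ifP => [_|ni]; rewrite ?eqxx ?ji ?ni ?shiftS.
- exact: weight_shift_gt1.
- exact: weight_lam_gt1.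
- exact: lam_lt_shift.
Qed.
End Phase.

Lemma TKiter_phase i j : inInd (i, j) ->
  TKiter lam m (hpoint (orbit_coord i j 0)) = Some (hpoint (orbit_coord j (third i j) 0)).
Proof.
move=> ij_Ind; rewrite -orbit_coord_rescale //.
by apply: (TKiter_orbit (f := fun k => hpoint (orbit_coord i j k))) => k; apply: TK_orbit_step.
Qed.

Lemma TKiter_cycle :
  TKiter lam (m + m + m) (hpoint (orbit_coord 0 2 0)) = Some (hpoint (orbit_coord 0 2 0)).
Proof. by rewrite !TKiterD TKiter_phase //= TKiter_phase //= TKiter_phase. Qed.

End Orbit.

Theorem theorem2p9 (R : realType) (m : nat) (lam : R) :
  (0 < m)%N ->
  lam ^+ 3 - m%:R * lam ^+ 2 - 1 = 0 ->
  let P := (1 / (1 + lam + lam ^+ 2), lam / (1 + lam + lam ^+ 2)) in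
  inDeltaK lam P /\
  exists m1 n1 : nat, [/\ (0 < m1)%N, (0 < n1)%N, m1 <> n1,
    TKiter lam m1 P <> None & TKiter lam m1 P = TKiter lam n1 P].
Proof.
move=> m_gt0 lam_root P.
have -> : P = hpoint (orbit_coord lam 0 2 0).
  by rewrite /P /hpoint /orbit_coord /shift /=; congr (_ / _, _ / _); ring.
split; first exact: (inDeltaK_orbit m_gt0 lam_root (_ : inInd (0, 2)) m_gt0).
have cycle := TKiter_cycle m_gt0 lam_root.
exists (m + m + m)%N, ((m + m + m) + (m + m + m))%N; split.
- by rewrite !addn_gt0 m_gt0.
- by rewrite !addn_gt0 m_gt0.
- lia.
- by rewrite cycle.
- by rewrite [in RHS]TKiterD cycle /= cycle.
Qed.
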